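(* Let $\mathfrak c:(0,1)\to(0,\infty)$ be any function, $\alpha>0$, $n\ge1$, $p_0\in(1/2,1)$ and $0<\epsilon<p_0-1/2$. Consider two two-armed problem instances with Bernoulli arms: in $\mathcal P_1$, arm 1 is $\mathrm{Ber}(p_0)$ and arm 2 is $\mathrm{Ber}(p_0-\epsilon)$; in $\mathcal P_2$ the arms are swapped. For an instance, let $c_i=\mathfrak c(q_i)$ where $q_i$ is the Bernoulli parameter of arm $i$, and define the approx-oracle allocation for the objective $\varphi(c,T)=c/T^\alpha$ as $\tilde T_i^*\coloneqq n\,c_i^{1/\alpha}/(c_1^{1/\alpha}+c_2^{1/\alpha})$, $i=1,2$. Let $\tau\coloneqq|\tilde T_1^*-n/2|$ computed for $\mathcal P_1$ (it has the same value for $\mathcal P_2$). Then for every adaptive allocation scheme $\mathcal A$ with budget $n$, letting $T_1,T_2$ ($T_1+T_2=n$) be the numbers of samples it allocates to the two arms, $$\max_{\mathcal P\in\{\mathcal P_1,\mathcal P_2\}}\ \max_{i\in\{1,2\}}\ \mathbb E_{\mathcal P}\big[|T_i-\tilde T_i^*|\big]\;\ge\;\frac{\big(1-\epsilon\sqrt{n/(1-p_0)}\big)\,\tau}{2},$$ where $\tilde T_i^*$ is the approx-oracle allocation of the instance $\mathcal P$ under which the expectation is taken.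
   Context: An adaptive allocation scheme with budget $n$ is a sequence of rules that, at each round $t=1,\dots,n$, selects an arm $i\in\{1,2\}$ based on $n$ and the history of selected arms and observations up to round $t-1$; the selected arm then produces an independent draw from its distribution. $\mathbb E_{\mathcal P}$ denotes expectation under the probability measure induced by the scheme and instance $\mathcal P$ on the observations. *)

From Stdlib Require Import Reals Lra List.
Open Scope R_scope.

(* A history is a list of (arm, observation) pairs, most recent first.
   Arm encoding: false = arm 1, true = arm 2.  Observation: Bernoulli outcome. *)
Definition history := list (bool * bool).

Definition scheme := history -> bool.

Definition armParam (q1 q2 : R) (a : bool) : R := if a then q2 else q1.

Fixpoint expectRun (A : scheme) (q1 q2 : R) (k : nat) (h : history)
    (f : history -> R) : R :=
  match k with
  | O => f h
  | S k' =>
      let a := A h in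
      let q := armParam q1 q2 a in
      q * expectRun A q1 q2 k' ((a, true) :: h) f
      + (1 - q) * expectRun A q1 q2 k' ((a, false) :: h) f
  end.

Definition expectation (A : scheme) (q1 q2 : R) (n : nat) (f : history -> R) : R :=
  expectRun A q1 q2 n nil f.

Definition countArm (i : bool) (h : history) : nat :=
  length (filter (fun p => Bool.eqb (fst p) i) h).

Definition approxOracle (alpha : R) (n : nat) (c1 c2 : R) (i : bool) : R :=
  let w1 := Rpower c1 (/ alpha) in
  let w2 := Rpower c2 (/ alpha) in
  INR n * (if i then w2 else w1) / (w1 + w2).

Definition devArm (cf : R -> R) (alpha : R) (n : nat) (A : scheme)
    (q1 q2 : R) (i : bool) : R :=
  expectation A q1 q2 n
    (fun h => Rabs (INR (countArm i h) - approxOracle alpha n (cf q1) (cf q2) i)).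

(* Le Cam's two-point method.  Write a for the approx-oracle allocation of arm 1
   under P1; under P2 it is n - a, so |a - (n - a)| = 2 tau and, for every final
   history, the two deviations |T1 - a| and |T1 - (n - a)| sum to at least 2 tau.
   Summing over histories weighted by the smaller of the two path probabilities
   gives E_P1 + E_P2 >= 2 tau * overlap, and Cauchy-Schwarz bounds the overlap
   below by half the squared Bhattacharyya coefficient of the two path laws.
   That coefficient factorises over rounds whatever arm is pulled, giving
   BC(p0, p0 - eps)^(2n), and Bernoulli's inequality turns this into
   1 - eps sqrt(n / (1 - p0)). *)

From Stdlib Require Import Reals Lra List.
Open Scope R_scope.

Lemma sum_sq_le_mul a1 a2 b1 b2 c1 c2 :
  0 <= a1 -> 0 <= a2 -> 0 <= b1 -> 0 <= b2 -> 0 <= c1 -> 0 <= c2 ->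
  a1 ^ 2 <= b1 * c1 -> a2 ^ 2 <= b2 * c2 ->
  (a1 + a2) ^ 2 <= (b1 + b2) * (c1 + c2).
Proof.
  intros.
  assert (Hsq : (2 * (a1 * a2)) ^ 2 <= (b1 * c2 + b2 * c1) ^ 2).
  { pose proof (pow2_ge_0 (b1 * c2 - b2 * c1)).
    replace ((2 * (a1 * a2)) ^ 2) with (4 * (a1 ^ 2 * a2 ^ 2)) by ring.
    nra. }
  assert (2 * (a1 * a2) <= b1 * c2 + b2 * c1)
    by (apply Rsqr_incr_0_var; unfold Rsqr; nra).
  nra.
Qed.

Lemma pow_one_sub_ge d m : 0 <= d <= 1 -> 1 - INR m * d <= (1 - d) ^ m.
Proof.
  intros Hd; induction m as [|m IH]; [simpl; lra|].
  rewrite S_INR; simpl.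
  pose proof (pos_INR m); pose proof (pow_le (1 - d) m ltac:(lra)).
  destruct (Rle_dec 0 (1 - INR m * d)); nra.
Qed.

Lemma armParam_bounds q1 q2 a :
  0 <= q1 <= 1 -> 0 <= q2 <= 1 -> 0 <= armParam q1 q2 a <= 1.
Proof. destruct a; simpl; auto. Qed.

Definition bhattacharyya (q1 q2 : R) : R :=
  sqrt (q1 * q2) + sqrt ((1 - q1) * (1 - q2)).

Section JointRun.

Variables (A : scheme) (q1 q2 : R).
Hypotheses (Hq1 : 0 <= q1 <= 1) (Hq2 : 0 <= q2 <= 1).

(* Sums [F] over all final histories, carrying the weight [u] (resp. [v]) of the
   history multiplied by its probability under the instance (q1, q2) (resp. the
   swapped instance (q2, q1)). *)
Fixpoint jointRun (k : nat) (h : history) (u v : R)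
    (F : history -> R -> R -> R) : R :=
  match k with
  | O => F h u v
  | S k' =>
      let a := A h in
      jointRun k' ((a, true) :: h) (u * armParam q1 q2 a) (v * armParam q2 q1 a) F
      + jointRun k' ((a, false) :: h)
          (u * (1 - armParam q1 q2 a)) (v * (1 - armParam q2 q1 a)) F
  end.

Lemma expectRun_jointRun_l f k h u v :
  u * expectRun A q1 q2 k h f = jointRun k h u v (fun h u _ => u * f h).
Proof.
  revert h u v; induction k as [|k IH]; intros h u v; simpl; [reflexivity|].
  rewrite <- !IH; ring.
Qed.

Lemma expectRun_jointRun_r g k h u v :
  v * expectRun A q2 q1 k h g = jointRun k h u v (fun h _ v => v * g h).
Proof.
  revert h u v; induction k as [|k IH]; intros h u v; simpl; [reflexivity|].
  rewrite <- !IH; ring.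
Qed.

Lemma jointRun_add F G k h u v :
  jointRun k h u v (fun h u v => F h u v + G h u v)
  = jointRun k h u v F + jointRun k h u v G.
Proof.
  revert h u v; induction k as [|k IH]; intros h u v; simpl; [reflexivity|].
  rewrite !IH; ring.
Qed.

Lemma jointRun_scale c F k h u v :
  jointRun k h u v (fun h u v => c * F h u v) = c * jointRun k h u v F.
Proof.
  revert h u v; induction k as [|k IH]; intros h u v; simpl; [reflexivity|].
  rewrite !IH; ring.
Qed.

Lemma jointRun_mass k h u v : jointRun k h u v (fun _ u v => u + v) = u + v.
Proof.
  revert h u v; induction k as [|k IH]; intros h u v; simpl; [reflexivity|].
  rewrite !IH; ring.
Qed.

Lemma jointRun_le F G :
  (forall h u v, 0 <= u -> 0 <= v -> F h u v <= G h u v) ->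
  forall k h u v, 0 <= u -> 0 <= v -> jointRun k h u v F <= jointRun k h u v G.
Proof.
  intros HFG k; induction k as [|k IH]; intros h u v hu hv; simpl; [auto|].
  pose proof (armParam_bounds q1 q2 (A h) Hq1 Hq2).
  pose proof (armParam_bounds q2 q1 (A h) Hq2 Hq1).
  apply Rplus_le_compat; apply IH; nra.
Qed.

Lemma jointRun_ge0 F :
  (forall h u v, 0 <= u -> 0 <= v -> 0 <= F h u v) ->
  forall k h u v, 0 <= u -> 0 <= v -> 0 <= jointRun k h u v F.
Proof.
  intros HF k h u v hu hv.
  rewrite <- (Rmult_0_l (jointRun k h u v (fun _ _ _ => 0))), <- jointRun_scale.
  apply jointRun_le; auto.
  intros; rewrite Rmult_0_l; auto.
Qed.

Lemma jointRun_Cauchy_Schwarz F G H :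
  (forall h u v, 0 <= u -> 0 <= v ->
     0 <= F h u v /\ 0 <= G h u v /\ 0 <= H h u v /\
     F h u v ^ 2 <= G h u v * H h u v) ->
  forall k h u v, 0 <= u -> 0 <= v ->
  jointRun k h u v F ^ 2 <= jointRun k h u v G * jointRun k h u v H.
Proof.
  intros HF k; induction k as [|k IH]; intros h u v hu hv; simpl;
    [apply HF; auto|].
  pose proof (armParam_bounds q1 q2 (A h) Hq1 Hq2).
  pose proof (armParam_bounds q2 q1 (A h) Hq2 Hq1).
  apply sum_sq_le_mul; try (apply IH; nra);
    apply jointRun_ge0; try nra; intros; apply HF; auto.
Qed.

(* Whatever arm is pulled, the two instances give it the parameters q1 and q2
   in some order, so each round contributes the same factor. *)
Lemma jointRun_sqrt k h u v : 0 <= u -> 0 <= v ->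
  jointRun k h u v (fun _ u v => sqrt (u * v))
  = sqrt (u * v) * bhattacharyya q1 q2 ^ k.
Proof.
  revert h u v; induction k as [|k IH]; intros h u v hu hv; simpl; [ring|].
  pose proof (armParam_bounds q1 q2 (A h) Hq1 Hq2).
  pose proof (armParam_bounds q2 q1 (A h) Hq2 Hq1).
  rewrite !IH by nra.
  assert (Hhead : u * armParam q1 q2 (A h) * (v * armParam q2 q1 (A h))
                  = (u * v) * (q1 * q2)) by (destruct (A h); simpl; ring).
  assert (Htail : u * (1 - armParam q1 q2 (A h)) * (v * (1 - armParam q2 q1 (A h)))
                  = (u * v) * ((1 - q1) * (1 - q2))) by (destruct (A h); simpl; ring).
  unfold bhattacharyya; rewrite Hhead, Htail, !sqrt_mult; try nra; ring.
Qed.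

Definition overlap (k : nat) (h : history) (u v : R) : R :=
  jointRun k h u v (fun _ u v => Rmin u v).

Lemma overlap_ge k h u v : 0 <= u -> 0 <= v ->
  (sqrt (u * v) * bhattacharyya q1 q2 ^ k) ^ 2 <= overlap k h u v * (u + v).
Proof.
  intros hu hv.
  rewrite <- (jointRun_sqrt k h u v), <- (jointRun_mass k h u v) by auto.
  apply jointRun_Cauchy_Schwarz; auto.
  intros h' u' v' hu' hv'.
  rewrite pow2_sqrt by nra.
  split; [apply sqrt_pos|].
  unfold Rmin; destruct (Rle_dec u' v'); repeat split; nra.
Qed.

Lemma expectRun_two_point f g delta :
  (forall h, 0 <= f h) -> (forall h, 0 <= g h) ->
  (forall h, delta <= f h + g h) ->
  forall k h u v, 0 <= u -> 0 <= v ->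
  delta * overlap k h u v <= u * expectRun A q1 q2 k h f + v * expectRun A q2 q1 k h g.
Proof.
  intros Hf Hg Hfg k h u v hu hv.
  rewrite expectRun_jointRun_l with (v := v), expectRun_jointRun_r with (u := u).
  unfold overlap; rewrite <- jointRun_add, <- jointRun_scale.
  apply jointRun_le; auto.
  intros h' u' v' hu' hv'.
  specialize (Hf h'); specialize (Hg h'); specialize (Hfg h').
  unfold Rmin; destruct (Rle_dec u' v'); nra.
Qed.

End JointRun.

Lemma bhattacharyya_bounds p0 eps :
  1/2 < p0 < 1 -> 0 < eps < p0 - 1/2 ->
  0 <= bhattacharyya p0 (p0 - eps) <= 1 /\
  4 * (1 - p0) * (1 - bhattacharyya p0 (p0 - eps)) <= eps ^ 2.
Proof.
  intros hp he; unfold bhattacharyya.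
  rewrite !sqrt_mult by lra.
  set (s := sqrt p0); set (t := sqrt (p0 - eps));
  set (U := sqrt (1 - (p0 - eps))); set (V := sqrt (1 - p0)).
  assert (Hs : s * s = p0) by (apply sqrt_sqrt; lra).
  assert (Ht : t * t = p0 - eps) by (apply sqrt_sqrt; lra).
  assert (HU : U * U = 1 - (p0 - eps)) by (apply sqrt_sqrt; lra).
  assert (HV : V * V = 1 - p0) by (apply sqrt_sqrt; lra).
  assert (0 <= s) by apply sqrt_pos; assert (0 <= t) by apply sqrt_pos;
  assert (0 <= U) by apply sqrt_pos; assert (0 <= V) by apply sqrt_pos.
  (* 1 - BC is half the squared Hellinger distance; each of its two terms is
     eps^2 divided by a square bounded below. *)
  assert (Hdefect : 1 - (s * t + V * U) = ((s - t) ^ 2 + (U - V) ^ 2) / 2) by nra.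
  assert (Hst : 2 * (s - t) ^ 2 <= eps ^ 2).
  { assert (Hdiff : (s - t) * (s + t) = eps) by nra.
    assert (t <= s) by nra; assert (2 <= (s + t) ^ 2) by nra.
    rewrite <- Hdiff, Rpow_mult_distr.
    pose proof (pow2_ge_0 (s - t)); nra. }
  assert (HUV : 4 * (1 - p0) * (U - V) ^ 2 <= eps ^ 2).
  { assert (Hdiff : (U - V) * (U + V) = eps) by nra.
    assert (V <= U) by nra; assert (4 * (1 - p0) <= (U + V) ^ 2) by nra.
    rewrite <- Hdiff, Rpow_mult_distr.
    pose proof (pow2_ge_0 (U - V)); nra. }
  rewrite Hdefect.
  pose proof (pow2_ge_0 (s - t)); pose proof (pow2_ge_0 (U - V)).
  split; [split|]; nra.
Qed.

Lemma bhattacharyya_pow_ge p0 eps n :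
  1/2 < p0 < 1 -> 0 < eps < p0 - 1/2 ->
  1 - eps * sqrt (INR n / (1 - p0)) <= bhattacharyya p0 (p0 - eps) ^ (2 * n).
Proof.
  intros hp he.
  destruct (bhattacharyya_bounds p0 eps hp he) as [Hrho Hdefect].
  set (rho := bhattacharyya p0 (p0 - eps)) in *.
  set (x := eps * sqrt (INR n / (1 - p0))).
  pose proof (pos_INR n).
  assert (Hn : 0 <= INR n / (1 - p0)) by (apply Rle_mult_inv_pos; lra).
  assert (Hx0 : 0 <= x) by (unfold x; pose proof (sqrt_pos (INR n / (1 - p0))); nra).
  assert (Hx2 : x ^ 2 * (1 - p0) = eps ^ 2 * INR n).
  { unfold x; rewrite Rpow_mult_distr, pow2_sqrt by auto.
    field; lra. }
  assert (Hbern : 1 - 2 * INR n * (1 - rho) <= rho ^ (2 * n)).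
  { pose proof (pow_one_sub_ge (1 - rho) (2 * n) ltac:(lra)) as Hb.
    rewrite mult_INR in Hb; replace (1 - (1 - rho)) with rho in Hb by ring.
    simpl (INR 2) in Hb; lra. }
  assert (Hlin : 2 * INR n * (1 - rho) * (4 * (1 - p0)) <= x ^ 2 / 2 * (4 * (1 - p0)))
    by nra.
  assert (2 * INR n * (1 - rho) <= x ^ 2 / 2)
    by (apply Rmult_le_reg_r with (4 * (1 - p0)); lra).
  destruct (Rle_dec x 1).
  - nra.
  - pose proof (pow_le rho (2 * n) ltac:(lra)); lra.
Qed.

Lemma approxOracle_swap alpha n c1 c2 :
  approxOracle alpha n c2 c1 false = INR n - approxOracle alpha n c1 c2 false.
Proof.
  unfold approxOracle, Rpower.
  pose proof (exp_pos (/ alpha * ln c1)); pose proof (exp_pos (/ alpha * ln c2)).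
  field; lra.
Qed.

Theorem mainTheorem7 (cf : R -> R)
    (hcf : forall q, 0 < q < 1 -> 0 < cf q)
    (alpha : R) (halpha : 0 < alpha) (n : nat) (hn : (1 <= n)%nat)
    (p0 : R) (hp0 : 1/2 < p0 < 1) (eps : R) (heps : 0 < eps < p0 - 1/2)
    (A : scheme) :
  let tau := Rabs (approxOracle alpha n (cf p0) (cf (p0 - eps)) false - INR n / 2) in
  Rmax (Rmax (devArm cf alpha n A p0 (p0 - eps) false)
             (devArm cf alpha n A p0 (p0 - eps) true))
       (Rmax (devArm cf alpha n A (p0 - eps) p0 false)
             (devArm cf alpha n A (p0 - eps) p0 true))
  >= (1 - eps * sqrt (INR n / (1 - p0))) * tau / 2.
Proof.
  intros tau.
  set (a := approxOracle alpha n (cf p0) (cf (p0 - eps)) false) in tau.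
  set (E1 := devArm cf alpha n A p0 (p0 - eps) false).
  set (E2 := devArm cf alpha n A (p0 - eps) p0 false).
  assert (Hq1 : 0 <= p0 <= 1) by lra; assert (Hq2 : 0 <= p0 - eps <= 1) by lra.
  assert (Htau : 0 <= tau) by apply Rabs_pos.
  assert (Htwo_point : 2 * tau * overlap A p0 (p0 - eps) n nil 1 1 <= E1 + E2).
  { replace (E1 + E2) with (1 * E1 + 1 * E2) by ring.
    unfold E1, E2, devArm, expectation; rewrite (approxOracle_swap alpha n (cf p0)).
    fold a; apply expectRun_two_point; try lra; intro h; try apply Rabs_pos.
    set (c := INR (countArm false h)); unfold tau.
    replace (2 * Rabs (a - INR n / 2)) with (Rabs ((c - (INR n - a)) + - (c - a))).
    - eapply Rle_trans; [apply Rabs_triang|]; rewrite Rabs_Ropp; lra.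
    - rewrite <- (Rabs_right 2) at 1 by lra; rewrite <- Rabs_mult; f_equal; field. }
  assert (Hoverlap := overlap_ge A p0 (p0 - eps) Hq1 Hq2 n nil 1 1 Rle_0_1 Rle_0_1).
  rewrite Rmult_1_r, sqrt_1, Rmult_1_l, <- pow_mult, Nat.mul_comm in Hoverlap.
  pose proof (bhattacharyya_pow_ge p0 eps n hp0 heps).
  assert (E1 <= Rmax (Rmax E1 (devArm cf alpha n A p0 (p0 - eps) true))
                     (Rmax E2 (devArm cf alpha n A (p0 - eps) p0 true)))
    by (eapply Rle_trans; apply Rmax_l).
  assert (E2 <= Rmax (Rmax E1 (devArm cf alpha n A p0 (p0 - eps) true))
                     (Rmax E2 (devArm cf alpha n A (p0 - eps) p0 true)))
    by (eapply Rle_trans; [apply Rmax_l | apply Rmax_r]).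
  nra.
Qed.
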